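(* Consider Algorithm MWHVC (described in the context) run on a hypergraph $G=(V,E)$ of rank $f$ with vertex weights $w$, with parameters $\varepsilon\in(0,1]$, $\beta=\varepsilon/(f+\varepsilon)$ and multiplier $\alpha>1$. For every iteration $i\ge 0$ and every vertex $v\notin C$ (at iteration $i$), we have $\sum_{e\in E'(v)} \mathrm{deal}_i(e)\le \beta\cdot w(v)$, where $E'(v)$ is the set of hyperedges containing $v$ that are still uncovered in iteration $i$.
   Context: Let $G=(V,E)$ be a hypergraph: each hyperedge is a nonempty subset of $V$ of size at most $f$ (rank $f$). Vertices have nonnegative weights $w(v)$. For $v\in V$, $E(v)=\{e\in E: v\in e\}$; $\Delta=\max_v |E(v)|\ge 3$. A hyperedge $e$ is covered by $C\subseteq V$ if $e\cap C\neq\emptyset$. The computation is distributed in synchronous rounds on the bipartite network with node set $V\cup E$ and a link between $v$ and $e$ iff $v\in e$. Parameters: $\varepsilon\in(0,1]$, $\beta=\varepsilon/(f+\varepsilon)$, and a multiplier $\alpha>1$. Algorithm MWHVC: Initialize $C\gets\emptyset$ and $E'(v)\gets E(v)$ for every $v$. Iteration $0$: every hyperedge $e$ sets $\mathrm{deal}_0(e)=\beta\cdot\min_{v\in e} w(v)/|E(v)|$ and $\delta_0(e)=\mathrm{deal}_0(e)$. For $i=1,2,\dots$: (a) every vertex $v\notin C$ (not terminated) checks whether $\sum_{e\in E(v)}\delta_{i-1}(e)\ge(1-\beta)w(v)$; if so, $v$ joins $C$, tells every $e\in E'(v)$ that $e$ is covered, and terminates. (b) Every uncovered hyperedge that receives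 such a message becomes covered, informs all its vertices, and terminates. (c) Every vertex $v\notin C$ that is told $e$ is covered sets $E'(v)\gets E'(v)\setminus\{e\}$; if $E'(v)=\emptyset$, $v$ terminates without joining $C$. (d) Every vertex $v\notin C$ sends ''raise'' to all $e\in E'(v)$ if $\sum_{e\in E'(v)}\mathrm{deal}_{i-1}(e)\le(\beta/\alpha)w(v)$, and otherwise sends ''stuck'' to all $e\in E'(v)$. (e) Every uncovered hyperedge $e$ sets $\mathrm{deal}_i(e)=\mathrm{deal}_{i-1}(e)$ if it received some ''stuck'' message, and $\mathrm{deal}_i(e)=\alpha\cdot\mathrm{deal}_{i-1}(e)$ otherwise, and $\delta_i(e)=\delta_{i-1}(e)+\mathrm{deal}_i(e)$. If $e$ becomes covered in iteration $j$, then by convention $\delta_i(e)=\delta_{j-1}(e)$ for all $i\ge j$. *)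

From HB Require Import structures.
From mathcomp Require Import all_boot all_order all_algebra.
Set Implicit Arguments. Unset Strict Implicit. Unset Printing Implicit Defensive.
Import Order.TTheory GRing.Theory Num.Theory.
Local Open Scope ring_scope.

Record mwhvc_state (V E : finType) (R : realFieldType) := MkState {
  inC   : V -> bool;
  term  : V -> bool;          (* v has terminated (joined C or E'(v) = empty) *)
  cov   : E -> bool;
  Ep    : V -> {set E};
  deal  : E -> R;
  delta : E -> R
}.

Section MWHVC.
Variables (V E : finType) (R : realFieldType).
Variable inc : V -> E -> bool.   (* inc v e  <->  v \in e *)
Variable w : V -> R.
Variables (beta alpha : R).

Definition Eof (v : V) : {set E} := [set e | inc v e].
Definition deg (v : V) : nat := #|Eof v|.

(* minimum of a (nonempty) sequence; 0 on the empty sequence *)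
Definition seqmin (s : seq R) : R :=
  match s with [::] => 0 | x :: s' => foldr Num.min x s' end.

Definition deal0 (e : E) : R :=
  beta * seqmin [seq w v / (deg v)%:R | v <- enum V & inc v e].

Definition init_state : mwhvc_state V E R :=
  MkState (fun _ => false) (fun _ => false) (fun _ => false)
          Eof deal0 deal0.

(* One iteration i >= 1, steps (a)-(e). *)
Definition step (s : mwhvc_state V E R) : mwhvc_state V E R :=
  (* (a) vertices joining C *)
  let J v := ~~ term s v && ((1 - beta) * w v <= \sum_(e | inc v e) delta s e) in
  let C' v := inC s v || J v in
  let newcov e := ~~ cov s e && [exists v, J v && (e \in Ep s v)] in
  let cov' e := cov s e || newcov e in
  let told v := ~~ term s v && ~~ C' v && [exists e, newcov e && (e \in Ep s v)] in
  let Ep' v := if C' v then Ep s v else [set e in Ep s v | ~~ newcov e] in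
  let term' v := [|| term s v, J v | told v && (Ep' v == set0)] in
  (* (d) non-terminated vertices send "stuck" unless their sum is small *)
  let stuck v := ~~ term' v &&
                 ~~ (\sum_(e in Ep' v) deal s e <= beta / alpha * w v) in
  let deal' e := if cov' e then deal s e
                 else if [exists v, stuck v && (e \in Ep' v)] then deal s e
                 else alpha * deal s e in
  let delta' e := if cov' e then delta s e else delta s e + deal' e in
  MkState C' term' cov' Ep' deal' delta'.

(* state at the end of iteration i (iteration 0 = initialization) *)
Definition state_at (i : nat) : mwhvc_state V E R := iter i step init_state.

End MWHVC.

From HB Require Import structures.
From mathcomp Require Import all_boot all_order all_algebra.
From mathcomp Require Import ring.
Import Order.TTheory GRing.Theory Num.Theory.
Local Open Scope ring_scope.

(* The bound is an invariant of the iterations.  Initially deal_0(e) is at most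
   beta w(v)/|E(v)| for every e in E(v).  In an iteration, either the remaining
   deals of v sum to at most (beta/alpha) w(v), and multiplying each by at most
   alpha keeps the sum below beta w(v); or v says "stuck", so none of its
   remaining deals grows and the sum can only shrink as E'(v) shrinks.  A vertex
   that terminates outside C sends nothing, which is harmless only because its
   E'(v) is empty; this is the second half of the invariant. *)

Lemma ler_sum_subset (R : numDomainType) (I : finType) (A B : {set I})
    (F : I -> R) :
  A \subset B -> (forall i, i \in B -> 0 <= F i) ->
  \sum_(i in A) F i <= \sum_(i in B) F i.
Proof.
move=> /setIidPr sAB F_ge0; rewrite [X in _ <= X](big_setID A) /= sAB lerDl.
by apply: sumr_ge0 => i; rewrite inE => /andP[_ /F_ge0].
Qed.

Lemma seqmin_ge0 (R : realFieldType) (s : seq R) :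
  all (fun x => 0 <= x) s -> 0 <= seqmin s.
Proof.
case: s => [|x s] //= /andP[x_ge0].
by elim: s => [|y s IHs] //= /andP[y_ge0 s_ge0]; rewrite le_min y_ge0 IHs.
Qed.

Lemma seqmin_le (R : realFieldType) (s : seq R) (x : R) :
  x \in s -> seqmin s <= x.
Proof.
case: s => [|y s] //=; rewrite inE => /orP[/eqP ->|].
  by elim: s => [|z s IHs] //=; rewrite ge_min IHs orbT.
elim: s => [|z s IHs] //=; rewrite inE => /orP[/eqP ->|xs].
  by rewrite ge_min lexx.
by rewrite ge_min IHs ?orbT.
Qed.

Section Invariant.

Set Implicit Arguments.

Variables (V E : finType) (R : realFieldType).
Variables (inc : V -> E -> bool) (w : V -> R) (beta alpha : R).
Hypotheses (beta_ge0 : 0 <= beta) (alpha_gt1 : 1 < alpha).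
Hypothesis w_ge0 : forall v, 0 <= w v.

Record mwhvc_invariant (s : mwhvc_state V E R) : Prop := {
  deal_ge0 : forall e, 0 <= deal s e;
  Ep_terminated : forall v, term s v -> ~~ inC s v -> Ep s v = set0;
  sum_deal_Ep_le : forall v, ~~ inC s v ->
    \sum_(e in Ep s v) deal s e <= beta * w v
}.

Lemma deal0_ge0 (e : E) : 0 <= deal0 inc w beta e.
Proof.
rewrite /deal0 mulr_ge0 // seqmin_ge0 //.
by apply/allP => x /mapP[u _ ->]; rewrite divr_ge0.
Qed.

Lemma deal0_le (v : V) (e : E) :
  inc v e -> deal0 inc w beta e <= beta * (w v / (deg inc v)%:R).
Proof.
move=> ve; rewrite /deal0 ler_wpM2l // seqmin_le //.
apply: (map_f (fun u => w u / (deg inc u)%:R)).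
by rewrite mem_filter ve mem_enum.
Qed.

Lemma sum_deal0_le (v : V) :
  \sum_(e in Eof inc v) deal0 inc w beta e <= beta * w v.
Proof.
apply: le_trans (_ : \sum_(e in Eof inc v) beta * (w v / (deg inc v)%:R) <= _).
  by apply: ler_sum => e; rewrite inE; apply: deal0_le.
rewrite sumr_const -/(deg inc v).
have [-> | deg_gt0] := posnP (deg inc v); first by rewrite mulr0n mulr_ge0.
have deg_neq0 : (deg inc v)%:R != 0 :> R by rewrite pnatr_eq0 -lt0n.
suff -> : beta * (w v / (deg inc v)%:R) *+ deg inc v = beta * w v by [].
by rewrite -mulr_natr; field.
Qed.

Lemma init_state_invariant : mwhvc_invariant (init_state inc w beta).
Proof. by split => //= [e|v _]; [apply: deal0_ge0 | apply: sum_deal0_le]. Qed.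

Section Step.

Variable s : mwhvc_state V E R.
Hypothesis s_inv : mwhvc_invariant s.
Let s' := step inc w beta alpha s.

Lemma step_deal_ge0 (e : E) : 0 <= deal s' e.
Proof.
have alpha_ge0 : 0 <= alpha by rewrite ltW // (lt_trans ltr01).
rewrite /=; case: ifP => _; [|case: ifP => _].
- exact: deal_ge0.
- exact: deal_ge0.
- by rewrite mulr_ge0 ?(deal_ge0 s_inv).
Qed.

Lemma step_Ep_terminated (v : V) : term s' v -> ~~ inC s' v -> Ep s' v = set0.
Proof.
rewrite /= negb_or => + /andP[vNC vNJ]; rewrite (negbTE vNC) (negbTE vNJ) /=.
case/orP => [v_term | /andP[_ /eqP //]].
by apply/setP => e; rewrite !inE (Ep_terminated s_inv _ v_term vNC) in_set0.
Qed.

Lemma step_sum_deal_Ep_le (v : V) : ~~ inC s' v ->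
  \sum_(e in Ep s' v) deal s' e <= beta * w v.
Proof.
rewrite /= negb_or => /andP[vNC vNJ]; rewrite (negbTE vNC) (negbTE vNJ) /=.
set Ep' := [set e in Ep s v | _].
have [small | not_small] := boolP (\sum_(e in Ep') deal s e <= beta / alpha * w v).
  have alpha_gt0 : 0 < alpha by rewrite (lt_trans ltr01).
  apply: le_trans (_ : \sum_(e in Ep') alpha * deal s e <= _).
    apply: ler_sum => e _.
    have deal_le : deal s e <= alpha * deal s e.
      by rewrite ler_peMl ?deal_ge0 ?ltW.
    by case: ifP => _ //; case: ifP.
  rewrite -mulr_sumr (_ : beta * w v = alpha * (beta / alpha * w v)).
    by rewrite ler_wpM2l // ltW.
  by field; rewrite gt_eqF.
have [-> | Ep'_neq0] := eqVneq Ep' set0; first by rewrite big_set0 mulr_ge0.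
have vNterm : ~~ term s v.
  move: Ep'_neq0; apply: contraNN => v_term.
  rewrite /Ep' (Ep_terminated s_inv _ v_term vNC).
  by apply/eqP/setP => e; rewrite !inE.
have deal_frozen e : e \in Ep' -> deal s' e = deal s e.
  move=> eEp'; rewrite /=; case: ifP => // _; rewrite ifT //.
  apply/existsP; exists v; rewrite (negbTE vNterm) /= in vNJ.
  rewrite (negbTE vNC) (negbTE vNterm) (negbTE vNJ) /= -/Ep'.
  by rewrite (negbTE Ep'_neq0) andbF not_small eEp'.
rewrite (eq_bigr _ deal_frozen); apply: le_trans (sum_deal_Ep_le s_inv _ vNC).
apply: ler_sum_subset => [|e _]; last exact: deal_ge0.
by apply/subsetP => e; rewrite inE => /andP[].
Qed.

Lemma step_invariant : mwhvc_invariant s'.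
Proof.
split.
- exact: step_deal_ge0.
- exact: step_Ep_terminated.
- exact: step_sum_deal_Ep_le.
Qed.

End Step.

Lemma state_at_invariant (i : nat) :
  mwhvc_invariant (state_at inc w beta alpha i).
Proof.
elim: i => [|i IHi]; first exact: init_state_invariant.
by rewrite /state_at iterS; apply: step_invariant.
Qed.

End Invariant.

Theorem mainTheorem1 (R : realFieldType) (V E : finType)
  (inc : V -> E -> bool) (w : V -> R) (f : nat) (eps alpha : R)
  (Hedge_ne : forall e : E, exists v : V, inc v e)
  (Hrank : forall e : E, (#|[set v | inc v e]| <= f)%N)
  (HDelta : (3 <= \max_(v : V) #|Eof inc v|)%N)
  (Hw : forall v : V, 0 <= w v)
  (Heps : 0 < eps <= 1)
  (Halpha : 1 < alpha) :
  let beta := eps / (f%:R + eps) in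
  forall (i : nat) (v : V),
    ~~ inC (state_at inc w beta alpha i) v ->
    \sum_(e in Ep (state_at inc w beta alpha i) v)
        deal (state_at inc w beta alpha i) e <= beta * w v.
Proof.
move=> beta i v.
have beta_ge0 : 0 <= beta.
  by case/andP: Heps => eps_gt0 _; rewrite /beta divr_ge0 ?addr_ge0 // ltW.
by apply: sum_deal_Ep_le; apply: state_at_invariant.
Qed.
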